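(* If $g_N\in H_N^{\mathrm{rw}}$ converges weakly to $g\in H^{\mathrm{bm}}$ with respect to the Hilbert space convergence $H_N^{\mathrm{rw}}\to H^{\mathrm{bm}}$, then $\lim_{N\to\infty}\frac1N g_N(0)=0$.
   Context: $H_N^{\mathrm{rw}}=L^2(\frac1N\mathbb Z,\mu_N)$ where $\mu_N$ gives mass $\frac1N$ to each point; $H^{\mathrm{bm}}=L^2(\mathbb R,dx)$. Hilbert convergence is witnessed by $C=C_c^\infty(\mathbb R)$ and $\Phi_Nf=f|_{\frac1N\mathbb Z}$. Strong convergence $h_N\to h$: there exist $\tilde h_M\in C$ with $\|\tilde h_M-h\|_{H^{\mathrm{bm}}}\to0$ and $\lim_M\limsup_N\|\Phi_N\tilde h_M-h_N\|_{H_N^{\mathrm{rw}}}=0$. Weak convergence $g_N\to g$: $\langle g_N,h_N\rangle_{H_N^{\mathrm{rw}}}\to\langle g,h\rangle_{H^{\mathrm{bm}}}$ for every strongly convergent $h_N\to h$. *)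

From HB Require Import structures.
From mathcomp Require Import all_boot all_order all_algebra.
From mathcomp Require Import all_classical all_reals all_analysis.
Set Implicit Arguments. Unset Strict Implicit. Unset Printing Implicit Defensive.
Import Order.TTheory GRing.Theory Num.Theory.
Import numFieldNormedType.Exports.
Local Open Scope classical_set_scope.
Local Open Scope ring_scope.

Section Defs.
Variable R : realType.

Definition smooth (f : R -> R) : Prop :=
  forall (n : nat) (x : R), derivable (derive1n n f) x 1.
Definition compact_support (f : R -> R) : Prop :=
  exists B : R, forall x : R, B < `|x| -> f x = 0.
Definition test_fun (f : R -> R) : Prop := smooth f /\ compact_support f.

(** H_N^rw = L^2((1/N)Z, mu_N): a function g : int -> R, g k being the value
    at the point k/N; mu_N gives mass 1/N to each point. *)
Definition rw_normsq (N : nat) (g : int -> R) : \bar R :=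
  \esum_(k in [set: int]) ((N%:R)^-1 * (g k) ^+ 2)%:E.
Definition in_rw (N : nat) (g : int -> R) : Prop := (rw_normsq N g < +oo)%E.
Definition rw_norm (N : nat) (g : int -> R) : R := Num.sqrt (fine (rw_normsq N g)).
(* inner product: sum over Z (absolutely convergent for g, h in L^2),
   computed as the limit of the symmetric partial sums *)
Definition rw_inner (N : nat) (g h : int -> R) : R :=
  limn (fun n : nat => \sum_(i < (2 * n).+1)
          (N%:R)^-1 * g (i%:Z - n%:Z) * h (i%:Z - n%:Z)).

Definition bm_normsq (f : R -> R) : \bar R :=
  (\int[@lebesgue_measure R]_x ((f x) ^+ 2)%:E)%E.
Definition in_bm (f : R -> R) : Prop :=
  measurable_fun [set: R] f /\ (bm_normsq f < +oo)%E.
Definition bm_norm (f : R -> R) : R := Num.sqrt (fine (bm_normsq f)).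
Definition bm_inner (f g : R -> R) : R :=
  fine (\int[@lebesgue_measure R]_x (f x * g x)%:E)%E.

Definition Phi (N : nat) (f : R -> R) : int -> R :=
  fun k => f (k%:~R / N%:R).

Definition strong_conv (hN : nat -> int -> R) (h : R -> R) : Prop :=
  exists ht : nat -> R -> R,
    (forall M, test_fun (ht M)) /\
    (fun M => bm_norm (ht M \- h)) @ \oo --> 0 /\
    (fun M => limn_esup (fun N => (rw_norm N (Phi N (ht M) \- hN N))%:E))
      @ \oo --> 0%E.

Definition weak_conv (gN : nat -> int -> R) (g : R -> R) : Prop :=
  forall (hN : nat -> int -> R) (h : R -> R),
    (forall N, in_rw N (hN N)) -> in_bm h -> strong_conv hN h ->
    (fun N => rw_inner N (gN N) (hN N)) @ \oo --> bm_inner g h.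

End Defs.

(** Testing against the normalised point mass [delta0] at the origin gives
    [<g_N, delta0> = g_N(0) / N].  Since [||delta0||^2 = 1/N], the sequence
    [delta0] converges strongly to [0] (approximated by the zero test
    function), so weak convergence forces [g_N(0) / N -> <g, 0> = 0]. *)

From HB Require Import structures.
From mathcomp Require Import all_boot all_order all_algebra.
From mathcomp Require Import all_classical all_reals all_analysis.
Set Implicit Arguments. Unset Strict Implicit. Unset Printing Implicit Defensive.
Import Order.TTheory GRing.Theory Num.Theory.
Import numFieldNormedType.Exports.
Local Open Scope classical_set_scope.
Local Open Scope ring_scope.

Section RandomWalkSpace.
Variable R : realType.
Implicit Types (N : nat) (g h : int -> R).

Definition delta0 : int -> R := fun k => (k == 0)%:R.

Lemma rw_normsq_delta0 N : rw_normsq N delta0 = (N%:R^-1 : R)%:E.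
Proof.
rewrite /rw_normsq (_ : (N%:R^-1)%:E =
    \esum_(k in [set (0 : int)]) (N%:R^-1 * delta0 k ^+ 2)%:E); last first.
  by rewrite esum_set1 /delta0 ?eqxx ?expr1n ?mulr1 // lee_fin invr_ge0.
rewrite [RHS]esum_mkcond; apply: eq_esum => k _.
by rewrite /delta0 in_set1; case: eqP => //= _; rewrite expr0n mulr0.
Qed.

Lemma in_rw_delta0 N : in_rw N delta0.
Proof. by rewrite /in_rw rw_normsq_delta0 ltry. Qed.

Lemma rw_norm_delta0 N : rw_norm N delta0 = Num.sqrt N%:R^-1.
Proof. by rewrite /rw_norm rw_normsq_delta0. Qed.

Lemma rw_normsqN N h : rw_normsq N (fun k => - h k) = rw_normsq N h.
Proof. by apply: eq_esum => k _; rewrite sqrrN. Qed.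

(* Only the [i = n] term of the symmetric partial sums survives. *)
Lemma rw_inner_delta0r N g : rw_inner N g delta0 = N%:R^-1 * g 0.
Proof.
rewrite /rw_inner (_ : (fun n : nat => _) = fun _ => N%:R^-1 * g 0) ?lim_cst //.
apply/funext => n.
have n_lt : (n < (2 * n).+1)%N by rewrite ltnS mul2n -addnn leq_addr.
rewrite (bigD1 (Ordinal n_lt)) //= subrr /delta0 eqxx mulr1 big1 ?addr0 //.
move=> i /eqP i_neq_n; rewrite subr_eq0 (_ : (_ == _) = false) ?mulr0 //.
by apply/negbTE/eqP => -[] i_eq; apply: i_neq_n; apply: val_inj.
Qed.

End RandomWalkSpace.

Section ZeroFunction.
Variable R : realType.

Lemma derive1n_cst0 n : derive1n n (fun _ : R => 0 : R^o) = (fun _ => 0).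
Proof.
elim: n => // n IH; rewrite derive1nS IH; apply/funext => x; exact: derive1_cst.
Qed.

Lemma test_fun0 : test_fun (fun _ : R => 0).
Proof.
split; last by exists 0.
by move=> n x; rewrite derive1n_cst0; exact: derivable_cst.
Qed.

Lemma bm_normsq0 : bm_normsq (fun _ : R => 0) = 0%E.
Proof.
rewrite /bm_normsq (_ : (fun x => _) = cst 0%E) ?integral0 //.
by apply/funext => x /=; rewrite expr0n.
Qed.

Lemma in_bm0 : in_bm (fun _ : R => 0).
Proof. by split; [exact: measurable_cst | rewrite bm_normsq0 ltry]. Qed.

Lemma bm_inner0r (f : R -> R) : bm_inner f (fun _ => 0) = 0.
Proof.
rewrite /bm_inner (_ : (fun x => _) = cst 0%E) ?integral0 //.
by apply/funext => x /=; rewrite mulr0.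
Qed.

Lemma strong_conv0 (hN : nat -> int -> R) :
  (fun N => rw_norm N (hN N)) @ \oo --> 0 -> strong_conv hN (fun _ => 0).
Proof.
move=> hN_cvg0; exists (fun _ _ => 0); split; first by move=> M; exact: test_fun0.
split.
  apply: cvg_near_cst; apply: nearW => M.
  rewrite /bm_norm (_ : _ \- _ = fun _ => 0) ?bm_normsq0 ?sqrtr0 //.
  by apply/funext => x /=; rewrite subr0.
have Phi0E N : rw_norm N (Phi N (fun _ => 0) \- hN N) = rw_norm N (hN N).
  rewrite /rw_norm -(rw_normsqN N (hN N)); congr (Num.sqrt (fine (rw_normsq N _))).
  by apply/funext => k /=; rewrite /Phi sub0r.
have normsE_cvg0 : (fun N => (rw_norm N (hN N))%:E) @ \oo --> 0%E.
  by apply: cvg_EFin; [exact: nearW | exact: hN_cvg0].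
apply: cvg_near_cst; apply: nearW => M; under eq_fun do rewrite Phi0E.
by rewrite is_cvg_limn_esupE; [exact: cvg_lim | exact: cvgP normsE_cvg0].
Qed.

Lemma strong_conv_delta0 : strong_conv (fun _ => @delta0 R) (fun _ => 0).
Proof.
apply: strong_conv0; under eq_fun do rewrite rw_norm_delta0.
rewrite -sqrtr0; apply: (continuous_cvg _ (@sqrt_continuous R 0)).
by rewrite -cvg_shiftS; exact: cvg_harmonic.
Qed.

End ZeroFunction.

Theorem proposition5p10 (R : realType) (gN : nat -> int -> R) (g : R -> R)
  (hgN : forall N : nat, in_rw N (gN N)) (hg : in_bm g)
  (hweak : weak_conv gN g) :
  (fun N : nat => (N%:R)^-1 * gN N 0) @ \oo --> 0.
Proof.
have := hweak _ _ (@in_rw_delta0 R) (@in_bm0 R) (@strong_conv_delta0 R).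
by rewrite bm_inner0r; under eq_fun do rewrite rw_inner_delta0r.
Qed.
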